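(* Let $\varepsilon>0$, $u\in\mathcal{SF}_\varepsilon$, and let $T^{\rm pos},T^{\rm neg}\in\mathcal{T}_\varepsilon(\mathbb{R}^2)$ be two triangles sharing a side (i.e. $\mathcal{H}^1(T^{\rm pos}\cap T^{\rm neg})=\varepsilon$) such that $\chi(u,T^{\rm pos})\ge0$ and $\chi(u,T^{\rm neg})\le0$. Then $F_\varepsilon(u,T^{\rm pos}\cup T^{\rm neg})\ge\tfrac53\varepsilon$.
   Context: Let $\hat e_1=(1,0)$, $\hat e_2=\tfrac12(1,\sqrt3)$, $\hat e_3=\tfrac12(-1,\sqrt3)$ and $\mathcal{L}=\{z_1\hat e_1+z_2\hat e_2\colon z_1,z_2\in\mathbb{Z}\}$, with sublattices $\mathcal{L}^1=\{z_1(\hat e_1+\hat e_2)+z_2(\hat e_2+\hat e_3)\colon z\in\mathbb{Z}^2\}$, $\mathcal{L}^2=\mathcal{L}^1+\hat e_1$, $\mathcal{L}^3=\mathcal{L}^1+\hat e_2$. $\mathcal{T}(\mathbb{R}^2)$ is the set of closed triangles $\mathrm{conv}\{i,j,k\}$, $i,j,k\in\mathcal L$ pairwise at distance 1; each has one vertex in each sublattice, labelled $i\in\mathcal{L}^1,j\in\mathcal{L}^2,k\in\mathcal{L}^3$. $\mathcal{L}_\varepsilon=\varepsilon\mathcal{L}$, $\mathcal{T}_\varepsilon(\mathbb{R}^2)=\varepsilon\mathcal{T}(\mathbb{R}^2)$, $\mathcal{T}_\varepsilon(A)=\{T\in\mathcal{T}_\varepsilon(\mathbb{R}^2)\colon T\subset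 A\}$. $\mathcal{SF}_\varepsilon=\{u\colon\mathcal{L}_\varepsilon\to\mathcal{S}^1\}$. $F_\varepsilon(u,T)=\varepsilon|u(\varepsilon i)+u(\varepsilon j)+u(\varepsilon k)|^2$ for $T=\mathrm{conv}\{\varepsilon i,\varepsilon j,\varepsilon k\}$, and $F_\varepsilon(u,A)=\sum_{T\in\mathcal{T}_\varepsilon(A)}F_\varepsilon(u,T)$. With $v\times w=v_1w_2-v_2w_1$, the chirality is $\chi(u,T)=\frac{2}{3\sqrt3}\big(u(\varepsilon i)\times u(\varepsilon j)+u(\varepsilon j)\times u(\varepsilon k)+u(\varepsilon k)\times u(\varepsilon i)\big)$. *)

From Stdlib Require Import Reals ZArith Lra.
Open Scope R_scope.

(* Points of the lattice L are encoded by their integer coordinates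
   (z1, z2) w.r.t. the basis e1 = (1,0), e2 = (1/2, sqrt 3 / 2). *)
Definition latpt := (Z * Z)%type.

Definition e1 : R * R := (1, 0).
Definition e2 : R * R := (1 / 2, sqrt 3 / 2).
Definition e3 : R * R := (- 1 / 2, sqrt 3 / 2).

Definition pos (p : latpt) : R * R :=
  (IZR (fst p) * fst e1 + IZR (snd p) * fst e2,
   IZR (fst p) * snd e1 + IZR (snd p) * snd e2).

Definition dist2 (x y : R * R) : R :=
  (fst x - fst y) ^ 2 + (snd x - snd y) ^ 2.

(* Sublattices: in lattice coordinates e1 + e2 = (1,1), e2 + e3 = (-1,2),
   e1 = (1,0), e2 = (0,1). *)
Definition inL1 (p : latpt) : Prop :=
  exists a b : Z, p = (a * 1 + b * (-1), a * 1 + b * 2)%Z.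
Definition inL2 (p : latpt) : Prop :=
  exists a b : Z, p = (a * 1 + b * (-1) + 1, a * 1 + b * 2 + 0)%Z.
Definition inL3 (p : latpt) : Prop :=
  exists a b : Z, p = (a * 1 + b * (-1) + 0, a * 1 + b * 2 + 1)%Z.

(* A triangle of T(R^2), given by its vertices labelled by sublattice:
   i in L^1, j in L^2, k in L^3, pairwise at (Euclidean) distance 1.
   The triangle of T_eps(R^2) is eps times conv{i,j,k}. *)
Record ltriangle : Type := Tri { ti : latpt; tj : latpt; tk : latpt }.

Definition is_triangle (T : ltriangle) : Prop :=
  inL1 (ti T) /\ inL2 (tj T) /\ inL3 (tk T) /\
  dist2 (pos (ti T)) (pos (tj T)) = 1 /\
  dist2 (pos (tj T)) (pos (tk T)) = 1 /\
  dist2 (pos (tk T)) (pos (ti T)) = 1.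

(* Two (distinct) triangles share a side: they have two common vertices
   (equivalently, H^1(T ∩ T') = eps). Common vertices necessarily carry
   the same sublattice label. *)
Definition share_side (T T' : ltriangle) : Prop :=
  T <> T' /\
  ((ti T = ti T' /\ tj T = tj T') \/
   (tj T = tj T' /\ tk T = tk T') \/
   (tk T = tk T' /\ ti T = ti T')).

(* Spin fields u : L_eps -> S^1, indexed by lattice coordinates
   (u p stands for u(eps p)). *)
Definition spin_field (u : latpt -> R * R) : Prop :=
  forall p, fst (u p) ^ 2 + snd (u p) ^ 2 = 1.

Definition vadd (v w : R * R) : R * R := (fst v + fst w, snd v + snd w).
Definition vnorm2 (v : R * R) : R := fst v ^ 2 + snd v ^ 2.
Definition cross (v w : R * R) : R := fst v * snd w - snd v * fst w.

Definition F_tri (eps : R) (u : latpt -> R * R) (T : ltriangle) : R :=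
  eps * vnorm2 (vadd (vadd (u (ti T)) (u (tj T))) (u (tk T))).

Definition chi (u : latpt -> R * R) (T : ltriangle) : R :=
  2 / (3 * sqrt 3) *
  (cross (u (ti T)) (u (tj T)) + cross (u (tj T)) (u (tk T)) +
   cross (u (tk T)) (u (ti T))).

From Stdlib Require Import Reals Lra Psatz.
Open Scope R_scope.

(* Let a, b be the spins on the shared side, c and d the third spins of the
   two triangles, s = a + b and w = b - a.  Since |a| = |b|, s is orthogonal
   to w, so s . (c - a) is proportional to w x (c - a), which is the cross
   sum of the first triangle; likewise for d.  Opposite chiralities therefore
   place s . c and s . d on opposite sides of s . a = |s|^2 / 2.  Writing
   P = s . c and Q = s . d, the energy is 2|s|^2 + 2 + 2P + 2Q with
   P^2, Q^2 <= |s|^2, and if, say, P >= |s|^2 / 2 the excess over 5/3 is at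
   least 3 (Q + 1/3)^2. *)

Definition vsub (v w : R * R) : R * R := (fst v - fst w, snd v - snd w).
Definition dot (v w : R * R) : R := fst v * fst w + snd v * snd w.
Definition cross_sum (x y z : R * R) : R := cross x y + cross y z + cross z x.

Lemma vnorm2_ge0 (v : R * R) : 0 <= vnorm2 v.
Proof.
  unfold vnorm2; pose proof (pow2_ge_0 (fst v)); pose proof (pow2_ge_0 (snd v)).
  lra.
Qed.

Lemma vnorm2_vsub_eq0 (v w : R * R) : vnorm2 (vsub v w) = 0 -> v = w.
Proof.
  destruct v as [v1 v2], w as [w1 w2]; unfold vnorm2, vsub; simpl; intros H.
  pose proof (pow2_ge_0 (v1 - w1)); pose proof (pow2_ge_0 (v2 - w2)).
  f_equal; nra.
Qed.

Lemma vnorm2_vadd (v w : R * R) :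
  vnorm2 (vadd v w) = vnorm2 v + 2 * dot v w + vnorm2 w.
Proof. unfold vnorm2, vadd, dot; simpl; ring. Qed.

Lemma lagrange_identity (w s v : R * R) :
  dot w s * dot w v + cross w s * cross w v = vnorm2 w * dot s v.
Proof. unfold dot, cross, vnorm2; ring. Qed.

Lemma dot_sqr_le (v w : R * R) : dot v w ^ 2 <= vnorm2 v * vnorm2 w.
Proof.
  assert (Hww : vnorm2 w = dot w w) by (unfold vnorm2, dot; ring).
  rewrite Hww, <- lagrange_identity.
  pose proof (pow2_ge_0 (cross v w)); nra.
Qed.

Lemma cross_sum_translate (a b c : R * R) :
  cross_sum a b c = cross (vsub b a) (vsub c a).
Proof. unfold cross_sum, cross, vsub; simpl; ring. Qed.

Lemma vnorm2_double_vadd_ge1 (a c : R * R) :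
  vnorm2 a = 1 -> vnorm2 c = 1 -> 1 <= vnorm2 (vadd (vadd a a) c).
Proof.
  intros unit_a unit_c.
  assert (E : vnorm2 (vadd (vadd a a) c) = 1 + 2 * vnorm2 (vadd a c)).
  { unfold vnorm2, vadd in *; simpl in *; lra. }
  rewrite E; pose proof (vnorm2_ge0 (vadd a c)); lra.
Qed.

Lemma energy_bound (sigma P Q : R) :
  P ^ 2 <= sigma -> Q ^ 2 <= sigma -> sigma / 2 <= P ->
  2 * sigma + 2 + 2 * P + 2 * Q >= 5 / 3.
Proof. intros; pose proof (pow2_ge_0 (Q + 1 / 3)); nra. Qed.

Section SharedSide.

Variables a b c d : R * R.
Hypothesis unit_a : vnorm2 a = 1.
Hypothesis unit_b : vnorm2 b = 1.

Let s := vadd a b.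
Let w := vsub b a.

Lemma dot_diff_sum : dot w s = 0.
Proof. revert unit_a unit_b; unfold s, w, dot, vnorm2, vadd, vsub; simpl; lra. Qed.

Lemma dot_sum_left : dot s a = vnorm2 s / 2.
Proof. revert unit_a unit_b; unfold s, dot, vnorm2, vadd; simpl; lra. Qed.

Lemma dot_sum_third (x : R * R) :
  vnorm2 w * (dot s x - vnorm2 s / 2) = cross w s * cross_sum a b x.
Proof.
  rewrite <- dot_sum_left, cross_sum_translate; fold w.
  assert (Hlin : dot s x - dot s a = dot s (vsub x a))
    by (unfold dot, vsub; simpl; ring).
  rewrite Hlin, <- lagrange_identity, dot_diff_sum; ring.
Qed.

Lemma dot_sum_opposite_sides :
  cross_sum a b c * cross_sum a b d <= 0 -> 0 < vnorm2 w ->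
  (dot s c - vnorm2 s / 2) * (dot s d - vnorm2 s / 2) <= 0.
Proof.
  intros Hchi Hw.
  assert (Hprod : vnorm2 w ^ 2 *
                  ((dot s c - vnorm2 s / 2) * (dot s d - vnorm2 s / 2))
                  = cross w s ^ 2 * (cross_sum a b c * cross_sum a b d)).
  { transitivity ((vnorm2 w * (dot s c - vnorm2 s / 2)) *
                  (vnorm2 w * (dot s d - vnorm2 s / 2))); [ring|].
    rewrite !dot_sum_third; ring. }
  pose proof (pow2_ge_0 (cross w s)).
  assert (0 < vnorm2 w ^ 2) by nra.
  nra.
Qed.

End SharedSide.

Lemma spin_pair_energy_ge (a b c d : R * R) :
  vnorm2 a = 1 -> vnorm2 b = 1 -> vnorm2 c = 1 -> vnorm2 d = 1 ->
  cross_sum a b c * cross_sum a b d <= 0 ->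
  vnorm2 (vadd (vadd a b) c) + vnorm2 (vadd (vadd a b) d) >= 5 / 3.
Proof.
  intros unit_a unit_b unit_c unit_d Hchi.
  destruct (Req_dec (vnorm2 (vsub b a)) 0) as [Hw | Hw].
  { apply vnorm2_vsub_eq0 in Hw; subst b.
    pose proof (vnorm2_double_vadd_ge1 a c unit_a unit_c).
    pose proof (vnorm2_double_vadd_ge1 a d unit_a unit_d).
    lra. }
  pose proof (vnorm2_ge0 (vsub b a)).
  pose proof (dot_sum_opposite_sides a b c d unit_a unit_b Hchi ltac:(lra)).
  set (s := vadd a b) in *.
  rewrite !vnorm2_vadd, unit_c, unit_d.
  pose proof (dot_sqr_le s c) as Hc; pose proof (dot_sqr_le s d) as Hd.
  rewrite unit_c, Rmult_1_r in Hc; rewrite unit_d, Rmult_1_r in Hd.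
  destruct (Rle_dec (vnorm2 s / 2) (dot s c)) as [HP | HP].
  - pose proof (energy_bound _ _ _ Hc Hd HP); lra.
  - assert (HQ : vnorm2 s / 2 <= dot s d) by nra.
    pose proof (energy_bound _ _ _ Hd Hc HQ); lra.
Qed.

Definition rot (T : ltriangle) : ltriangle := Tri (tj T) (tk T) (ti T).

Lemma F_tri_rot (eps : R) (u : latpt -> R * R) (T : ltriangle) :
  F_tri eps u (rot T) = F_tri eps u T.
Proof. unfold F_tri, vnorm2, vadd; simpl; ring. Qed.

Lemma chi_rot (u : latpt -> R * R) (T : ltriangle) : chi u (rot T) = chi u T.
Proof. unfold chi, cross; simpl; ring. Qed.

Lemma chi_cross_sum (u : latpt -> R * R) (T : ltriangle) :
  chi u T = 2 / (3 * sqrt 3) * cross_sum (u (ti T)) (u (tj T)) (u (tk T)).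
Proof. reflexivity. Qed.

Lemma F_tri_pair_ge_shared_ij (eps : R) (u : latpt -> R * R) (T T' : ltriangle) :
  0 < eps -> spin_field u ->
  ti T = ti T' -> tj T = tj T' ->
  chi u T >= 0 -> chi u T' <= 0 ->
  F_tri eps u T + F_tri eps u T' >= 5 / 3 * eps.
Proof.
  intros Heps Hu Hi Hj Hpos Hneg.
  assert (Hconst : 0 < 2 / (3 * sqrt 3)).
  { pose proof (sqrt_lt_R0 3 ltac:(lra)). apply Rdiv_lt_0_compat; lra. }
  rewrite chi_cross_sum in Hpos, Hneg; rewrite <- Hi, <- Hj in Hneg.
  set (K := cross_sum _ _ (u (tk T))) in Hpos.
  set (K' := cross_sum _ _ (u (tk T'))) in Hneg.
  assert (0 <= K) by nra.
  assert (K' <= 0) by nra.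
  assert (Hchi : K * K' <= 0) by nra.
  unfold F_tri; rewrite <- Hi, <- Hj.
  pose proof (spin_pair_energy_ge _ _ _ _ (Hu (ti T)) (Hu (tj T))
                (Hu (tk T)) (Hu (tk T')) Hchi).
  nra.
Qed.

Theorem lemma3p2 (eps : R) (u : latpt -> R * R) (Tpos Tneg : ltriangle) :
  0 < eps ->
  spin_field u ->
  is_triangle Tpos -> is_triangle Tneg ->
  share_side Tpos Tneg ->
  chi u Tpos >= 0 -> chi u Tneg <= 0 ->
  F_tri eps u Tpos + F_tri eps u Tneg >= 5 / 3 * eps.
Proof.
  intros Heps Hu _ _ [_ Hshare] Hpos Hneg.
  destruct Hshare as [[Hi Hj] | [[Hj Hk] | [Hk Hi]]].
  - exact (F_tri_pair_ge_shared_ij eps u Tpos Tneg Heps Hu Hi Hj Hpos Hneg).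
  - rewrite <- (F_tri_rot eps u Tpos), <- (F_tri_rot eps u Tneg).
    rewrite <- chi_rot in Hpos, Hneg.
    exact (F_tri_pair_ge_shared_ij eps u (rot Tpos) (rot Tneg)
             Heps Hu Hj Hk Hpos Hneg).
  - rewrite <- (F_tri_rot eps u Tpos), <- (F_tri_rot eps u (rot Tpos)).
    rewrite <- (F_tri_rot eps u Tneg), <- (F_tri_rot eps u (rot Tneg)).
    rewrite <- 2!chi_rot in Hpos, Hneg.
    exact (F_tri_pair_ge_shared_ij eps u (rot (rot Tpos)) (rot (rot Tneg))
             Heps Hu Hk Hi Hpos Hneg).
Qed.
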